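(* Let $\epsilon>0$, $q>0$, and let $\Lambda_\epsilon$ be an $\epsilon$-lattice under the $\ell_2$ norm. For any $\mathbf{x}\in\mathbb{R}^d$ and $\boldsymbol\lambda\in\Lambda_\epsilon$, the points $\boldsymbol\lambda+\mathbf{x}$ and $\boldsymbol\lambda-\mathbf{x}$ are contained in the same number of expanded Voronoi regions $\mathbf{Vor}^+(\boldsymbol\lambda')$, $\boldsymbol\lambda'\in\Lambda_\epsilon$.
   Context: A lattice is the set of integer combinations of a basis of $\mathbb{R}^d$. Under $\ell_2$, its packing radius $r_p$ is the supremum of $r$ such that balls of radius $r$ around distinct lattice points are disjoint and its cover radius $r_c$ is the infimum of $r$ such that balls of radius $r$ around lattice points cover $\mathbb{R}^d$; an $\epsilon$-lattice has $\epsilon=r_p\le r_c\le3\epsilon$. The Voronoi region of $\boldsymbol\lambda'$ is $\mathbf{Vor}(\boldsymbol\lambda')=\{\mathbf{y}:\|\mathbf{y}-\boldsymbol\lambda'\|_2<\|\mathbf{y}-\boldsymbol\lambda''\|_2\ \forall\boldsymbol\lambda''\in\Lambda_\epsilon\setminus\{\boldsymbol\lambda'\}\}$. The expanded Voronoi region $\mathbf{Vor}^+(\boldsymbol\lambda')$ is the set of points within $\ell_2$ distance $2q\epsilon$ of $\mathbf{Vor}(\boldsymbol\lambda')$. *)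

From HB Require Import structures.
From mathcomp Require Import all_boot all_order all_algebra.
From mathcomp Require Import boolp classical_sets cardinality reals.
Set Implicit Arguments. Unset Strict Implicit. Unset Printing Implicit Defensive.
Import Order.TTheory GRing.Theory Num.Theory.
Local Open Scope ring_scope.
Local Open Scope classical_set_scope.

Section Defs.
Variables (R : realType) (d : nat).

Definition l2norm (v : 'rV[R]_d) : R := Num.sqrt (\sum_(i < d) v ord0 i ^+ 2).

Definition lattice (B : 'M[R]_d) : set 'rV[R]_d :=
  [set (map_mx (fun k : int => k%:~R) z) *m B | z in [set: 'rV[int]_d]].

Definition is_basis (B : 'M[R]_d) : Prop := B \in unitmx.

Definition packing_radius (L : set 'rV[R]_d) : R :=
  sup [set r : R | 0 <= r /\ forall l1 l2, L l1 -> L l2 -> l1 != l2 ->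
        forall y, ~ (l2norm (y - l1) <= r /\ l2norm (y - l2) <= r)].

Definition cover_radius (L : set 'rV[R]_d) : R :=
  inf [set r : R | 0 <= r /\ forall y, exists2 l, L l & l2norm (y - l) <= r].

Definition eps_lattice (L : set 'rV[R]_d) (eps : R) : Prop :=
  packing_radius L = eps /\ eps <= cover_radius L /\ cover_radius L <= 3 * eps.

Definition Vor (L : set 'rV[R]_d) (l' : 'rV[R]_d) : set 'rV[R]_d :=
  [set y | forall l'', L l'' -> l'' != l' -> l2norm (y - l') < l2norm (y - l'')].

Definition dist_to (A : set 'rV[R]_d) (p : 'rV[R]_d) : R :=
  inf [set l2norm (p - y) | y in A].

Definition Vor_plus (L : set 'rV[R]_d) (q eps : R) (l' : 'rV[R]_d) : set 'rV[R]_d :=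
  [set p | dist_to (Vor L l') p <= 2 * q * eps].

End Defs.

From HB Require Import structures.
From mathcomp Require Import all_boot all_order all_algebra.
From mathcomp Require Import boolp classical_sets cardinality reals.
Import Order.TTheory GRing.Theory Num.Theory.
Local Open Scope ring_scope.
Local Open Scope classical_set_scope.
Local Open Scope card_scope.

(* The point reflection [p |-> 2 lam - p] through a lattice point is an
   involutive isometry mapping the lattice onto itself.  Any such map sends
   Vor(l') onto Vor(f l') and preserves distances to sets, hence maps the
   expanded regions containing p bijectively onto those containing f p; the
   reflection through lam exchanges lam + x and lam - x. *)

Section InvolutiveIsometry.
Variables (R : realType) (d : nat) (L : set 'rV[R]_d).
Variable f : 'rV[R]_d -> 'rV[R]_d.
Hypothesis fK : involutive f.
Hypothesis f_isometry : forall a b, l2norm (f a - f b) = l2norm (a - b).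
Hypothesis f_lattice : forall p, L p -> L (f p).

Lemma dist_to_image (A : set 'rV[R]_d) p : dist_to (f @` A) (f p) = dist_to A p.
Proof.
rewrite /dist_to; congr inf; apply/seteqP; split => r /=.
  by move=> [_ [y Ay <-] <-]; exists y; rewrite ?f_isometry.
by move=> [y Ay <-]; exists (f y); [exists y | rewrite f_isometry].
Qed.

Lemma Vor_map l' y : Vor L l' y -> Vor L (f l') (f y).
Proof.
move=> Vy l'' Ll'' l''_neq.
rewrite f_isometry -[in X in _ < X](fK l'') f_isometry.
apply: Vy; first exact: f_lattice.
by apply: contra l''_neq => /eqP <-; rewrite fK.
Qed.

Lemma Vor_image l' : Vor L (f l') = f @` Vor L l'.
Proof.
apply/seteqP; split => y; last by move=> [z Vz <-]; exact: Vor_map.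
by move=> /Vor_map; rewrite fK => Vfy; exists (f y); rewrite ?fK.
Qed.

Lemma Vor_plus_map (q eps : R) l' p :
  Vor_plus L q eps (f l') (f p) = Vor_plus L q eps l' p.
Proof. by rewrite /Vor_plus /= Vor_image dist_to_image. Qed.

Lemma Vor_plus_cover_map (q eps : R) p :
  [set l' | L l' /\ Vor_plus L q eps l' (f p)] =
  f @` [set l' | L l' /\ Vor_plus L q eps l' p].
Proof.
apply/seteqP; split => l' /=.
  move=> [Ll' Vl']; exists (f l'); last exact: fK.
  by split; [exact: f_lattice | rewrite -Vor_plus_map fK].
by move=> [l [Ll Vl] <-]; split; [exact: f_lattice | rewrite Vor_plus_map].
Qed.

Lemma card_Vor_plus_cover_map (q eps : R) p :
  [set l' | L l' /\ Vor_plus L q eps l' (f p)] #=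
  [set l' | L l' /\ Vor_plus L q eps l' p].
Proof.
rewrite Vor_plus_cover_map; apply: inj_card_eq.
by apply: in2W; exact: can_inj fK.
Qed.

End InvolutiveIsometry.

Section PointReflection.
Variables (R : realType) (d : nat).
Implicit Types (lam p : 'rV[R]_d).

Definition pointrefl lam p := lam *+ 2 - p.

Lemma pointreflK lam : involutive (pointrefl lam).
Proof. by move=> p; rewrite /pointrefl opprB addrC subrK. Qed.

Lemma l2normN p : l2norm (- p) = l2norm p.
Proof. by congr Num.sqrt; apply: eq_bigr => i _; rewrite mxE sqrrN. Qed.

Lemma pointrefl_isometry lam a b :
  l2norm (pointrefl lam a - pointrefl lam b) = l2norm (a - b).
Proof. by rewrite -l2normN /pointrefl opprB addrC opprB -addrA addKr. Qed.

Lemma lattice_pointrefl (B : 'M[R]_d) lam p :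
  lattice B lam -> lattice B p -> lattice B (pointrefl lam p).
Proof.
move=> [z1 _ <-] [z2 _ <-]; exists (z1 *+ 2 - z2) => //.
by rewrite /pointrefl raddfB raddfMn /= !mulr2n mulmxBl mulmxDl.
Qed.

Lemma pointrefl_addr lam p : pointrefl lam (lam + p) = lam - p.
Proof. by rewrite /pointrefl mulr2n opprD addrA addrK. Qed.

End PointReflection.

Theorem lemma32 (R : realType) (d : nat) (eps q : R) (B : 'M[R]_d)
  (heps : 0 < eps) (hq : 0 < q) (hB : is_basis B)
  (hL : eps_lattice (lattice B) eps)
  (x lam : 'rV[R]_d) (hlam : lattice B lam) :
  [set l' | lattice B l' /\ Vor_plus (lattice B) q eps l' (lam + x)] #=
  [set l' | lattice B l' /\ Vor_plus (lattice B) q eps l' (lam - x)].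
Proof.
rewrite -pointrefl_addr; apply/card_esym/card_Vor_plus_cover_map.
- exact: pointreflK.
- exact: pointrefl_isometry.
- by move=> p; exact: lattice_pointrefl.
Qed.
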